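(* Let $X_0^*$ be a $\{1,2,\dots\}$-valued random variable with $\mathbf P(X_0^*\ge2)>0$ and $\mathbf E(X_0^*m^{X_0^*})<\infty$, let $p>p_c$, let $X_0$ have law $(1-p)\delta_0+pP_{X_0^*}$, and let $n\ge0$. Then $$[\delta_n-\varphi_n(s)]^2\le 2\,(H_n(0)+\delta_n)\,\Theta_n(s),\qquad s\in(0,m).$$
   Context: Fix an integer $m\ge2$. Recursive system: $X_{n+1}$ has the law of $(X_{n,1}+\cdots+X_{n,m}-1)^+$, with $X_{n,i}$ independent copies of $X_n$. $p_c:=\frac{1}{1+\mathbf E\{[(m-1)X_0^*-1]m^{X_0^*}\}}$. $H_n(s):=\mathbf E(s^{X_n})$; $\delta_n:=(m-1)\mathbf E(X_nm^{X_n})-\mathbf E(m^{X_n})$; $\varphi_n(s):=(m-1)sH_n'(s)-H_n(s)$; and $$\Theta_n(s):=[H_n(s)-s(s-1)H_n'(s)]-\frac{(m-1)(m-s)}{m}[2sH_n'(s)+s^2H_n''(s)]+\delta_n .$$ *)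

From Stdlib Require Import Reals Lra ClassicalEpsilon.
Open Scope R_scope.

(* Value of a real series sum_{k>=0} f k (meaningful when it converges;
   an arbitrary real otherwise). *)
Definition series (f : nat -> R) : R :=
  epsilon (inhabits 0) (fun l => infinite_sum f l).

Definition is_law (mu : nat -> R) : Prop :=
  (forall k, 0 <= mu k) /\ infinite_sum mu 1.

Definition expect (mu : nat -> R) (f : nat -> R) : R :=
  series (fun k => mu k * f k).

Definition conv (a b : nat -> R) : nat -> R :=
  fun k => sum_f_R0 (fun i => a i * b (k - i)%nat) k.

Fixpoint conv_pow (a : nat -> R) (j : nat) : nat -> R :=
  match j with
  | O => fun k => if Nat.eqb k 0 then 1 else 0
  | S j' => conv a (conv_pow a j')
  end.

(* One step of the recursive system: law of (X_1+...+X_m - 1)^+. *)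
Definition step (m : nat) (a : nat -> R) : nat -> R :=
  fun k => match k with
           | O => conv_pow a m 0%nat + conv_pow a m 1%nat
           | S k' => conv_pow a m (S (S k'))
           end.

Definition law (m : nat) (mu0 : nat -> R) (n : nat) : nat -> R :=
  Nat.iter n (step m) mu0.

Definition init_law (p : R) (q : nat -> R) : nat -> R :=
  fun k => (if Nat.eqb k 0 then 1 - p else 0) + p * q k.

Definition p_crit (m : nat) (q : nat -> R) : R :=
  1 / (1 + expect q (fun k => ((INR m - 1) * INR k - 1) * INR m ^ k)).

(* H_n(s) = E(s^{X_n}), and its first two derivatives (termwise). *)
Definition Hn (m : nat) (mu0 : nat -> R) (n : nat) (s : R) : R :=
  expect (law m mu0 n) (fun k => s ^ k).
Definition dHn (m : nat) (mu0 : nat -> R) (n : nat) (s : R) : R :=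
  expect (law m mu0 n) (fun k => INR k * s ^ (k - 1)).
Definition d2Hn (m : nat) (mu0 : nat -> R) (n : nat) (s : R) : R :=
  expect (law m mu0 n) (fun k => INR k * INR (k - 1) * s ^ (k - 2)).

Definition delta_n (m : nat) (mu0 : nat -> R) (n : nat) : R :=
  (INR m - 1) * expect (law m mu0 n) (fun k => INR k * INR m ^ k)
  - expect (law m mu0 n) (fun k => INR m ^ k).

Definition phi_n (m : nat) (mu0 : nat -> R) (n : nat) (s : R) : R :=
  (INR m - 1) * s * dHn m mu0 n s - Hn m mu0 n s.

Definition Theta_n (m : nat) (mu0 : nat -> R) (n : nat) (s : R) : R :=
  (Hn m mu0 n s - s * (s - 1) * dHn m mu0 n s)
  - (INR m - 1) * (INR m - s) / INR m
      * (2 * s * dHn m mu0 n s + s ^ 2 * d2Hn m mu0 n s)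
  + delta_n m mu0 n.

From Stdlib Require Import Reals Lra Lia Psatz ClassicalEpsilon.
From Coquelicot Require Import Coquelicot.
Open Scope R_scope.

(* [H_n(0) + delta_n], [delta_n - phi_n(s)] and [Theta_n(s)] are expectations
   E c(X_n), E u(X_n), E theta(X_n) of explicit functions, so the claim is the
   discriminant condition for the quadratic t |-> E[t^2 c + 2 t u + 2 theta],
   and it suffices that this quadratic be nonnegative atom by atom.  At X_n = k >= 1, with x = s/m, the atom is
   ((m-1)k - 1) m^k ((t + 1 - x^k)^2 + 1 - x^(2k) - 2 k x^k (1 - x)), and
   2 k x^k (1 - x) <= 1 - x^(2k) by induction on k.  The hypotheses on X_0^*
   only serve to make E(X_n m^X_n) finite, which propagates along the
   recursion, and to force p >= 0. *)

Lemma series_Series (f : nat -> R) : ex_series f -> series f = Series f.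
Proof.
  intros Hf. apply Series_correct, is_series_Reals in Hf.
  unfold series. apply (uniqueness_sum f); [apply epsilon_spec; eexists|]; exact Hf.
Qed.

Definition summable (mu f : nat -> R) : Prop := ex_series (fun k => mu k * f k).

Lemma summable_plus mu f g :
  summable mu f -> summable mu g -> summable mu (fun k => f k + g k).
Proof.
  intros Hf Hg. eapply ex_series_ext; [|exact (ex_series_plus _ _ Hf Hg)].
  intros k. cbn. ring.
Qed.

Lemma summable_minus mu f g :
  summable mu f -> summable mu g -> summable mu (fun k => f k - g k).
Proof.
  intros Hf Hg. eapply ex_series_ext; [|exact (ex_series_minus _ _ Hf Hg)].
  intros k. cbn. ring.
Qed.

Lemma summable_scal mu c f : summable mu f -> summable mu (fun k => c * f k).
Proof.
  intros Hf. eapply ex_series_ext; [|exact (ex_series_scal c _ Hf)].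
  intros k. cbn. ring.
Qed.

Lemma summable_le mu f g :
  (forall k, 0 <= mu k * f k <= mu k * g k) -> summable mu g -> summable mu f.
Proof.
  intros Hfg Hg. apply (ex_series_le (fun k => mu k * f k) (fun k => mu k * g k));
    [intros k | exact Hg].
  change (norm _) with (Rabs (mu k * f k)). rewrite Rabs_pos_eq; apply Hfg.
Qed.

Lemma expect_plus mu f g : summable mu f -> summable mu g ->
  expect mu (fun k => f k + g k) = expect mu f + expect mu g.
Proof.
  intros Hf Hg. unfold expect.
  rewrite !series_Series by (exact Hf || exact Hg || exact (summable_plus _ _ _ Hf Hg)).
  rewrite <- Series_plus by assumption. apply Series_ext. intros k. ring.
Qed.

Lemma expect_minus mu f g : summable mu f -> summable mu g ->
  expect mu (fun k => f k - g k) = expect mu f - expect mu g.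
Proof.
  intros Hf Hg. unfold expect.
  rewrite !series_Series by (exact Hf || exact Hg || exact (summable_minus _ _ _ Hf Hg)).
  rewrite <- Series_minus by assumption. apply Series_ext. intros k. ring.
Qed.

Lemma expect_scal mu c f : summable mu f ->
  expect mu (fun k => c * f k) = c * expect mu f.
Proof.
  intros Hf. unfold expect.
  rewrite !series_Series by (exact Hf || exact (summable_scal _ c _ Hf)).
  rewrite <- Series_scal_l. apply Series_ext. intros k. ring.
Qed.

Lemma expect_nonneg mu f :
  (forall k, 0 <= mu k * f k) -> summable mu f -> 0 <= expect mu f.
Proof.
  intros Hf Hs. unfold expect. rewrite series_Series by exact Hs.
  set (g := fun k => mu k * f k).
  rewrite <- (Rmult_0_l (Series g)), <- Series_scal_l.
  apply Series_le; [intros k; specialize (Hf k); unfold g; lra | exact Hs].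
Qed.

Definition has_moments (M : R) (mu : nat -> R) : Prop :=
  (forall k, 0 <= mu k) /\ summable mu (fun k => M ^ k) /\
  summable mu (fun k => INR k * M ^ k).

Definition dirac0 : nat -> R := fun k => if Nat.eqb k 0 then 1 else 0.

Lemma summable_dirac0 f : summable dirac0 f.
Proof.
  apply ex_series_incr_1.
  assert (Hgeom : ex_series (fun k => 0 ^ k))
    by (apply ex_series_geom; rewrite Rabs_R0; lra).
  eapply ex_series_ext; [|exact (ex_series_scal_r 0 _ Hgeom)].
  intros k. cbn. ring.
Qed.

Lemma summable_shift2 mu f :
  summable mu f -> summable (fun k => mu (S (S k))) (fun k => f (S (S k))).
Proof. intros Hf. do 2 apply ex_series_incr_1 in Hf. exact Hf. Qed.

Lemma summable_mix a b al be f : summable a f -> summable b f ->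
  summable (fun k => al * a k + be * b k) f.
Proof.
  intros Ha Hb.
  eapply ex_series_ext;
    [|exact (ex_series_plus _ _ (ex_series_scal al _ Ha) (ex_series_scal be _ Hb))].
  intros k. cbn. ring.
Qed.

Section Moments.

Variable M : R.
Hypothesis HM : 1 <= M.

Let pow_M_nonneg k : 0 <= M ^ k.
Proof. apply pow_le; lra. Qed.

Lemma has_moments_ext a b : (forall k, a k = b k) -> has_moments M a -> has_moments M b.
Proof.
  intros Eab [Ha0 [Ha1 Ha2]]. split; [|split].
  - intros k. rewrite <- Eab. apply Ha0.
  - eapply ex_series_ext; [|exact Ha1]. intros k. cbn. rewrite Eab. reflexivity.
  - eapply ex_series_ext; [|exact Ha2]. intros k. cbn. rewrite Eab. reflexivity.
Qed.

Lemma has_moments_mix a b al be : 0 <= al -> 0 <= be ->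
  has_moments M a -> has_moments M b -> has_moments M (fun k => al * a k + be * b k).
Proof.
  intros Hal Hbe [Ha0 [Ha1 Ha2]] [Hb0 [Hb1 Hb2]].
  split; [|split]; try (apply summable_mix; assumption).
  intros k. specialize (Ha0 k). specialize (Hb0 k). nra.
Qed.

Lemma has_moments_dirac0 : has_moments M dirac0.
Proof.
  split; [|split]; try apply summable_dirac0.
  intros k. unfold dirac0. destruct (Nat.eqb k 0); lra.
Qed.

(* Cauchy products of nonnegative series: [M^k] splits multiplicatively and
   [k M^k] by the Leibniz rule. *)
Lemma has_moments_conv a b : has_moments M a -> has_moments M b -> has_moments M (conv a b).
Proof.
  intros [Ha0 [[la1 Ha1] [la2 Ha2]]] [Hb0 [[lb1 Hb1] [lb2 Hb2]]].
  assert (Hsplit : forall k i, (i <= k)%nat -> M ^ k = M ^ i * M ^ (k - i))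
    by (intros k i Hi; rewrite <- pow_add; f_equal; lia).
  assert (Hpos1 : forall c, (forall k, 0 <= c k) -> forall k, 0 <= c k * M ^ k)
    by (intros c Hc k; apply Rmult_le_pos; auto).
  assert (Hpos2 : forall c, (forall k, 0 <= c k) -> forall k, 0 <= c k * (INR k * M ^ k))
    by (intros c Hc k; apply Rmult_le_pos; [|apply Rmult_le_pos; [apply pos_INR|]]; auto).
  split; [|split].
  - intros k. apply cond_pos_sum. intros i. apply Rmult_le_pos; auto.
  - exists (la1 * lb1).
    eapply is_series_ext;
      [|exact (is_series_mult_pos _ _ _ _ Ha1 Hb1 (Hpos1 a Ha0) (Hpos1 b Hb0))].
    intros k. unfold conv. rewrite Rmult_comm, scal_sum. apply sum_eq.
    intros i Hi. rewrite (Hsplit k i Hi). ring.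
  - exists (la2 * lb1 + la1 * lb2).
    eapply is_series_ext; [|apply (is_series_plus _ _ _ _
      (is_series_mult_pos _ _ _ _ Ha2 Hb1 (Hpos2 a Ha0) (Hpos1 b Hb0))
      (is_series_mult_pos _ _ _ _ Ha1 Hb2 (Hpos1 a Ha0) (Hpos2 b Hb0)))].
    intros k. unfold conv. cbn. rewrite <- sum_plus, Rmult_comm, scal_sum. apply sum_eq.
    intros i Hi. rewrite (Hsplit k i Hi).
    replace (INR k) with (INR i + INR (k - i)) by (rewrite <- plus_INR; f_equal; lia).
    ring.
Qed.

Lemma has_moments_conv_pow a j : has_moments M a -> has_moments M (conv_pow a j).
Proof.
  intros Ha. induction j as [|j IH].
  - exact has_moments_dirac0.
  - apply has_moments_conv; assumption.
Qed.

Lemma has_moments_step m a : has_moments M a -> has_moments M (step m a).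
Proof.
  intros Ha. destruct (has_moments_conv_pow a m Ha) as [Hc0 [Hc1 Hc2]].
  set (c := conv_pow a m) in *.
  split; [|split].
  - intros [|k]; cbn; fold c; [pose proof (Hc0 0%nat); pose proof (Hc0 1%nat); lra | apply Hc0].
  - apply ex_series_incr_1. cbn. fold c.
    apply (summable_le (fun k => c (S (S k))) (fun k => M ^ S k) (fun k => M ^ S (S k)));
      [|exact (summable_shift2 _ _ Hc1)].
    intros k. assert (M ^ S k <= M ^ S (S k)) by (apply Rle_pow; auto).
    split; [apply Rmult_le_pos | apply Rmult_le_compat_l]; auto.
  - apply ex_series_incr_1. cbn. fold c.
    apply (summable_le (fun k => c (S (S k))) (fun k => INR (S k) * M ^ S k)
      (fun k => INR (S (S k)) * M ^ S (S k))); [|exact (summable_shift2 _ _ Hc2)].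
    intros k. assert (M ^ S k <= M ^ S (S k)) by (apply Rle_pow; auto).
    assert (INR (S k) <= INR (S (S k))) by (apply le_INR; auto).
    split; [apply Rmult_le_pos | apply Rmult_le_compat_l]; auto.
    + apply Rmult_le_pos; [apply pos_INR | auto].
    + apply Rmult_le_compat; auto. apply pos_INR.
Qed.

Lemma has_moments_law m mu0 n : has_moments M mu0 -> has_moments M (law m mu0 n).
Proof.
  intros H0. induction n as [|n IH]; [exact H0|]. apply has_moments_step, IH.
Qed.

End Moments.

Lemma pow_le_one x k : 0 <= x <= 1 -> 0 <= x ^ k <= 1.
Proof. intros Hx. split; [apply pow_le; lra | rewrite <- (pow1 k); apply pow_incr; lra]. Qed.

Lemma one_sub_pow_le x k : 0 <= x <= 1 -> 1 - x ^ k <= INR k * (1 - x).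
Proof.
  intros Hx. induction k as [|k IH]; [simpl; lra|].
  rewrite S_INR. simpl. pose proof (pow_le_one x k Hx). nra.
Qed.

Lemma mul_pow_le_one_sub_pow x k : 0 <= x <= 1 -> INR k * (1 - x) * x ^ k <= 1 - x ^ k.
Proof.
  intros Hx. induction k as [|k IH]; [simpl; lra|].
  rewrite S_INR. simpl. pose proof (pow_le_one x k Hx) as [Hk0 Hk1].
  assert (x * x ^ k <= x ^ k) by nra.
  assert (0 <= (INR k + 1) * (1 - x)) by (pose proof (pos_INR k); nra).
  nra.
Qed.

Lemma two_mul_pow_le_one_sub_sqr_pow x k : 0 <= x <= 1 ->
  2 * INR k * x ^ k * (1 - x) <= 1 - (x ^ k) ^ 2.
Proof.
  intros Hx. induction k as [|k IH]; [simpl; lra|].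
  pose proof (one_sub_pow_le x k Hx). pose proof (pow_le_one x k Hx).
  set (X := x ^ k) in *.
  (* Bernoulli gives [X + x X - 2 x + 2 k (1 - x) >= (1 - x) (2 - X)]. *)
  assert (Hinc : 0 <= (1 - x) * X * (X + x * X - 2 * x + 2 * INR k * (1 - x))).
  { apply Rmult_le_pos; [apply Rmult_le_pos|]; nra. }
  assert (E : 1 - (x ^ S k) ^ 2 - 2 * INR (S k) * x ^ S k * (1 - x)
    = (1 - X ^ 2 - 2 * INR k * X * (1 - x))
      + (1 - x) * X * (X + x * X - 2 * x + 2 * INR k * (1 - x)))
    by (rewrite S_INR; simpl; unfold X; ring).
  lra.
Qed.

(* [c_atom], [u_atom], [th_atom] are the functions of [X_n] whose expectations
   are [H_n(0) + delta_n], [delta_n - phi_n(s)] and [Theta_n(s)]; here [M] is [m]. *)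
Definition c_atom (M : R) (k : nat) : R :=
  0 ^ k + ((M - 1) * (INR k * M ^ k) - M ^ k).

Definition u_atom (M s : R) (k : nat) : R :=
  ((M - 1) * (INR k * M ^ k) - M ^ k)
  - ((M - 1) * s * (INR k * s ^ (k - 1)) - s ^ k).

Definition th_atom (M s : R) (k : nat) : R :=
  (s ^ k - s * (s - 1) * (INR k * s ^ (k - 1)))
  - (M - 1) * (M - s) / M
      * (2 * s * (INR k * s ^ (k - 1)) + s ^ 2 * (INR k * INR (k - 1) * s ^ (k - 2)))
  + ((M - 1) * (INR k * M ^ k) - M ^ k).

Lemma mul_deriv_term s k : s * (INR k * s ^ (k - 1)) = INR k * s ^ k.
Proof.
  destruct k as [|k]; [simpl; ring|].
  replace (S k - 1)%nat with k by lia. simpl. ring.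
Qed.

Lemma sqr_mul_deriv2_term s k :
  s ^ 2 * (INR k * INR (k - 1) * s ^ (k - 2)) = INR k * (INR k - 1) * s ^ k.
Proof.
  destruct k as [|[|k]]; [simpl; ring | simpl; ring|].
  replace (S (S k) - 1)%nat with (S k) by lia. replace (S (S k) - 2)%nat with k by lia.
  rewrite !S_INR. simpl. ring.
Qed.

Lemma atom_quadratic_eq M s k t : 0 < M -> 0 < s -> (1 <= k)%nat ->
  t ^ 2 * c_atom M k + 2 * t * u_atom M s k + 2 * th_atom M s k
  = ((M - 1) * INR k - 1) * M ^ k
    * ((t + 1 - (s / M) ^ k) ^ 2
       + (1 - ((s / M) ^ k) ^ 2 - 2 * INR k * (s / M) ^ k * (1 - s / M))).
Proof.
  intros HM Hs Hk.
  assert (E1 : INR k * s ^ (k - 1) = INR k * s ^ k / s)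
    by (rewrite <- mul_deriv_term; field; lra).
  assert (E2 : INR k * INR (k - 1) * s ^ (k - 2) = INR k * (INR k - 1) * s ^ k / s ^ 2)
    by (rewrite <- sqr_mul_deriv2_term; field; lra).
  assert (HMk : M ^ k <> 0) by (apply pow_nonzero; lra).
  unfold c_atom, u_atom, th_atom. rewrite E1, E2, pow_i by lia.
  unfold Rdiv. rewrite Rpow_mult_distr, pow_inv. field. lra.
Qed.

Lemma atom_quadratic_nonneg M s k t : 2 <= M -> 0 < s < M ->
  0 <= t ^ 2 * c_atom M k + 2 * t * u_atom M s k + 2 * th_atom M s k.
Proof.
  intros HM Hs. destruct k as [|k].
  - apply Req_le. unfold c_atom, u_atom, th_atom. simpl. ring.
  - rewrite atom_quadratic_eq by (lra || lia).
    assert (Hx : 0 <= s / M <= 1).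
    { assert (s / M * M = s) by (field; lra). split; nra. }
    pose proof (two_mul_pow_le_one_sub_sqr_pow (s / M) (S k) Hx).
    assert (HK : 0 <= (M - 1) * INR (S k) - 1) by (rewrite S_INR; pose proof (pos_INR k); nra).
    assert (0 < M ^ S k) by (apply pow_lt; lra).
    apply Rmult_le_pos; [apply Rmult_le_pos; lra|].
    pose proof (pow2_ge_0 (t + 1 - (s / M) ^ S k)). lra.
Qed.

Lemma c_atom_nonneg M k : 2 <= M -> 0 <= c_atom M k.
Proof.
  intros HM. unfold c_atom. destruct k as [|k]; [simpl; lra|].
  rewrite pow_i by lia.
  replace (0 + _) with (((M - 1) * INR (S k) - 1) * M ^ S k) by ring.
  apply Rmult_le_pos; [rewrite S_INR; pose proof (pos_INR k); nra | apply pow_le; lra].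
Qed.

Lemma discriminant_le C U T :
  (forall t, 0 <= t ^ 2 * C + 2 * t * U + 2 * T) -> 0 <= C -> U ^ 2 <= 2 * C * T.
Proof.
  intros Hq HC. destruct (Req_dec C 0) as [HC0|HC0].
  - subst C. destruct (Req_dec U 0) as [HU0|HU0].
    + subst U. specialize (Hq 0). nra.
    + specialize (Hq (- (T + 1) / U)).
      replace (2 * (- (T + 1) / U) * U) with (- 2 * (T + 1)) in Hq by (field; exact HU0).
      nra.
  - specialize (Hq (- U / C)).
    replace ((- U / C) ^ 2 * C + 2 * (- U / C) * U + 2 * T)
      with ((2 * C * T - U ^ 2) / C) in Hq by (field; exact HC0).
    assert (0 <= (2 * C * T - U ^ 2) / C * C) by (apply Rmult_le_pos; lra).
    replace ((2 * C * T - U ^ 2) / C * C) with (2 * C * T - U ^ 2) in * by (field; exact HC0).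
    lra.
Qed.

Section Expectations.

Variables (M s : R) (mu : nat -> R).
Hypotheses (HM : 2 <= M) (Hs : 0 < s < M) (Hmu : has_moments M mu).

Lemma summable_pow_M : summable mu (fun k => M ^ k).
Proof. apply Hmu. Qed.

Lemma summable_mul_pow_M : summable mu (fun k => INR k * M ^ k).
Proof. apply Hmu. Qed.

Lemma summable_of_bound f C1 C2 :
  (forall k, 0 <= f k <= C1 * M ^ k + C2 * (INR k * M ^ k)) -> summable mu f.
Proof.
  intros Hf. apply (summable_le _ _ (fun k => C1 * M ^ k + C2 * (INR k * M ^ k))).
  - intros k. pose proof (proj1 Hmu k). specialize (Hf k).
    split; [apply Rmult_le_pos | apply Rmult_le_compat_l]; lra.
  - apply summable_plus; apply summable_scal; apply Hmu.
Qed.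

Lemma summable_pow_0 : summable mu (fun k => 0 ^ k).
Proof.
  apply (summable_of_bound _ 1 0). intros k.
  assert (0 ^ k <= M ^ k) by (apply pow_incr; lra).
  split; [apply pow_le|]; lra.
Qed.

Lemma summable_pow_s : summable mu (fun k => s ^ k).
Proof.
  apply (summable_of_bound _ 1 0). intros k.
  assert (s ^ k <= M ^ k) by (apply pow_incr; lra).
  split; [apply pow_le|]; lra.
Qed.

Lemma summable_deriv_term : summable mu (fun k => INR k * s ^ (k - 1)).
Proof.
  apply (summable_of_bound _ 0 (/ s)). intros k.
  assert (Hk : INR k * s ^ k <= INR k * M ^ k)
    by (apply Rmult_le_compat_l; [apply pos_INR | apply pow_incr; lra]).
  replace (INR k * s ^ (k - 1)) with (/ s * (INR k * s ^ k))
    by (rewrite <- mul_deriv_term; field; lra).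
  assert (0 < / s) by (apply Rinv_0_lt_compat; lra).
  assert (0 <= INR k * s ^ k) by (apply Rmult_le_pos; [apply pos_INR | apply pow_le; lra]).
  split; nra.
Qed.

(* With [x = s/M]: [s^2 k (k-1) s^(k-2) = k M^k (k-1) x^k] and [k x^k <= 1/(1-x)]. *)
Lemma summable_deriv2_term : summable mu (fun k => INR k * INR (k - 1) * s ^ (k - 2)).
Proof.
  set (x := s / M).
  assert (Hx : 0 < x < 1) by (assert (x * M = s) by (unfold x; field; lra); split; nra).
  apply (summable_of_bound _ 0 (/ (s ^ 2 * (1 - x)))). intros k.
  assert (Hs2 : 0 < s ^ 2) by nra.
  replace (INR k * INR (k - 1) * s ^ (k - 2))
    with (/ s ^ 2 * (INR k * (INR k - 1) * s ^ k))
    by (rewrite <- sqr_mul_deriv2_term; field; lra).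
  assert (Hsk : s ^ k = x ^ k * M ^ k)
    by (rewrite <- Rpow_mult_distr; f_equal; unfold x; field; lra).
  pose proof (mul_pow_le_one_sub_pow x k ltac:(lra)).
  pose proof (pow_le_one x k ltac:(lra)).
  assert (Hkx : INR k * x ^ k <= / (1 - x)).
  { apply (Rmult_le_reg_r (1 - x)); [lra|]. rewrite Rinv_l by lra. nra. }
  assert (HkM : 0 <= INR k * M ^ k) by (apply Rmult_le_pos; [apply pos_INR | apply pow_le; lra]).
  assert (Hkk : 0 <= INR k * (INR k - 1))
    by (destruct k as [|k]; [simpl; lra | rewrite S_INR; pose proof (pos_INR k); nra]).
  assert (HY : 0 <= INR k * (INR k - 1) * s ^ k <= / (1 - x) * (INR k * M ^ k)).
  { rewrite Hsk. assert (0 <= M ^ k) by (apply pow_le; lra).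
    split; [apply Rmult_le_pos; [|apply Rmult_le_pos]; lra|].
    replace (INR k * (INR k - 1) * (x ^ k * M ^ k))
      with ((INR k * M ^ k) * ((INR k - 1) * x ^ k)) by ring.
    rewrite (Rmult_comm (/ (1 - x))). apply Rmult_le_compat_l; lra. }
  assert (0 < / s ^ 2) by (apply Rinv_0_lt_compat; lra).
  rewrite Rinv_mult, Rmult_0_l, Rplus_0_l, (Rmult_assoc (/ s ^ 2)).
  split; [apply Rmult_le_pos | apply Rmult_le_compat_l]; lra.
Qed.

Local Hint Resolve summable_plus summable_minus summable_scal
  summable_pow_M summable_mul_pow_M summable_pow_0 summable_pow_s
  summable_deriv_term summable_deriv2_term : summable.

Lemma summable_c_atom : summable mu (c_atom M).
Proof. unfold c_atom. auto 10 with summable. Qed.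

Lemma summable_u_atom : summable mu (u_atom M s).
Proof. unfold u_atom. auto 10 with summable. Qed.

Lemma summable_th_atom : summable mu (th_atom M s).
Proof. unfold th_atom. auto 10 with summable. Qed.

Local Hint Resolve summable_c_atom summable_u_atom summable_th_atom : summable.

Lemma expect_c_atom : expect mu (c_atom M)
  = expect mu (fun k => 0 ^ k)
    + ((M - 1) * expect mu (fun k => INR k * M ^ k) - expect mu (fun k => M ^ k)).
Proof.
  unfold c_atom. rewrite expect_plus, expect_minus, expect_scal; auto 10 with summable.
Qed.

Lemma expect_u_atom : expect mu (u_atom M s)
  = ((M - 1) * expect mu (fun k => INR k * M ^ k) - expect mu (fun k => M ^ k))
    - ((M - 1) * s * expect mu (fun k => INR k * s ^ (k - 1)) - expect mu (fun k => s ^ k)).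
Proof.
  unfold u_atom. rewrite !expect_minus, !expect_scal; auto 10 with summable.
Qed.

Lemma expect_th_atom : expect mu (th_atom M s)
  = (expect mu (fun k => s ^ k) - s * (s - 1) * expect mu (fun k => INR k * s ^ (k - 1)))
    - (M - 1) * (M - s) / M
        * (2 * s * expect mu (fun k => INR k * s ^ (k - 1))
           + s ^ 2 * expect mu (fun k => INR k * INR (k - 1) * s ^ (k - 2)))
    + ((M - 1) * expect mu (fun k => INR k * M ^ k) - expect mu (fun k => M ^ k)).
Proof.
  unfold th_atom.
  rewrite expect_plus, !expect_minus, !expect_scal, expect_plus, !expect_scal;
    auto 10 with summable.
Qed.

Lemma expect_atoms_discriminant :
  expect mu (u_atom M s) ^ 2 <= 2 * expect mu (c_atom M) * expect mu (th_atom M s).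
Proof.
  destruct Hmu as [Hmu0 _].
  apply discriminant_le.
  - intros t.
    rewrite <- (expect_scal _ (t ^ 2)), <- (expect_scal _ (2 * t)), <- (expect_scal _ 2),
      <- expect_plus, <- expect_plus; auto 10 with summable.
    apply expect_nonneg; [|auto 10 with summable].
    intros k. apply Rmult_le_pos; [apply Hmu0 | apply atom_quadratic_nonneg; assumption].
  - apply expect_nonneg; [|auto 10 with summable].
    intros k. apply Rmult_le_pos; [apply Hmu0 | apply c_atom_nonneg; assumption].
Qed.

End Expectations.

Lemma has_moments_of_law M q : 1 <= M -> is_law q -> q 0%nat = 0 ->
  summable q (fun k => INR k * M ^ k) -> has_moments M q.
Proof.
  intros HM [Hq _] Hq0 Hmom. split; [exact Hq | split; [|exact Hmom]].
  apply (summable_le _ _ (fun k => INR k * M ^ k)); [intros [|k] | exact Hmom].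
  - rewrite Hq0. lra.
  - assert (1 <= INR (S k)) by (apply (le_INR 1); lia).
    assert (0 <= M ^ S k) by (apply pow_le; lra).
    split; [apply Rmult_le_pos | apply Rmult_le_compat_l]; auto; nra.
Qed.

Lemma p_crit_pos m q : (2 <= m)%nat -> has_moments (INR m) q -> q 0%nat = 0 ->
  0 < p_crit m q.
Proof.
  intros hm [Hq0 [_ Hmom]] Hq00.
  assert (HM : 2 <= INR m) by (apply (le_INR 2); exact hm).
  assert (Hterm : forall k, 0 <= q k * (((INR m - 1) * INR k - 1) * INR m ^ k)
                              <= q k * ((INR m - 1) * (INR k * INR m ^ k))).
  { intros [|k]; [rewrite Hq00; lra|].
    assert (1 <= INR (S k)) by (apply (le_INR 1); lia).
    assert (0 <= INR m ^ S k) by (apply pow_le; lra).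
    split; [apply Rmult_le_pos | apply Rmult_le_compat_l]; auto; [apply Rmult_le_pos|]; nra. }
  assert (0 <= expect q (fun k => ((INR m - 1) * INR k - 1) * INR m ^ k)).
  { apply expect_nonneg; [apply Hterm|].
    exact (summable_le _ _ _ Hterm (summable_scal _ _ _ Hmom)). }
  unfold p_crit. apply Rdiv_lt_0_compat; lra.
Qed.

Theorem lemma3p4 (m : nat) (hm : (2 <= m)%nat) (q : nat -> R)
  (hq : is_law q) (hq0 : q 0%nat = 0)
  (hq2 : exists k, (2 <= k)%nat /\ 0 < q k)
  (hmom : exists l, infinite_sum (fun k => q k * (INR k * INR m ^ k)) l)
  (p : R) (hp1 : p <= 1) (hpc : p_crit m q < p)
  (n : nat) (s : R) (hs : 0 < s < INR m) :
  (delta_n m (init_law p q) n - phi_n m (init_law p q) n s) ^ 2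
  <= 2 * (Hn m (init_law p q) n 0 + delta_n m (init_law p q) n)
       * Theta_n m (init_law p q) n s.
Proof.
  assert (HM : 2 <= INR m) by (apply (le_INR 2); exact hm).
  assert (Hq : has_moments (INR m) q).
  { apply has_moments_of_law; [lra | exact hq | exact hq0 |].
    destruct hmom as [l Hl]. exists l. apply is_series_Reals, Hl. }
  assert (Hp : 0 <= p) by (pose proof (p_crit_pos m q hm Hq hq0); lra).
  assert (Hlaw : has_moments (INR m) (law m (init_law p q) n)).
  { apply has_moments_law; [lra|].
    apply (has_moments_ext _ (fun k => (1 - p) * dirac0 k + p * q k)).
    - intros k. unfold init_law, dirac0. destruct (Nat.eqb k 0); ring.
    - apply has_moments_mix; [lra | lra | apply has_moments_dirac0 | exact Hq]. }
  unfold delta_n, phi_n, Theta_n, Hn, dHn, d2Hn.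
  rewrite <- expect_c_atom, <- expect_u_atom, <- expect_th_atom by assumption.
  apply expect_atoms_discriminant; assumption.
Qed.
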